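(* Let $N$ be a simply connected $2$-step nilpotent Lie group with Lie algebra $\mathfrak n$ and a left-invariant Lorentzian metric $\langle\cdot,\cdot\rangle$ of $pH$-type whose center $\mathfrak Z$ is positive definite, and let $\mathfrak E=\mathfrak Z^{\perp}$ (which then contains the timelike direction). Then $\dim\mathfrak Z+1\le\dim\mathfrak E$.
   Context: For $y\in\mathfrak n$ let $J_y$ be defined by $\langle J_y x,w\rangle=\langle y,[x,w]\rangle$ for all $x,w$. Here $\mathfrak n=\mathfrak Z\oplus\mathfrak E$ orthogonally; choose orthonormal bases $\{z_\alpha\}$ of $\mathfrak Z$, $\{e_a\}$ of $\mathfrak E$, $\varepsilon_\alpha=\langle z_\alpha,z_\alpha\rangle$, $\bar\varepsilon_a=\langle e_a,e_a\rangle$. The involution $\iota$ is given by $\iota z_\alpha=\varepsilon_\alpha z_\alpha$, $\iota e_a=\bar\varepsilon_a e_a$, and $j(y)=\iota\circ J_{\iota y}$. The metric is of $pH$-type if $j(z)^2=-\langle z,\iota z\rangle I$ (on $\mathfrak E$) for all $z$ in the center. *)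

From HB Require Import structures.
From mathcomp Require Import all_boot all_order all_algebra.
From mathcomp Require Import reals.
Set Implicit Arguments. Unset Strict Implicit. Unset Printing Implicit Defensive.
Import Order.TTheory GRing.Theory Num.Theory.
Local Open Scope ring_scope.

Definition bform (R : realType) (n : nat) (G : 'M[R]_n) (u v : 'rV[R]_n) : R :=
  (u *m G *m v^T) 0 0.

(* Lie algebra axioms for a bracket on 'rV_n:
   bilinear (left-linear + alternating), alternating, Jacobi. *)
Definition lie_bracket (R : realType) (n : nat)
  (br : 'rV[R]_n -> 'rV[R]_n -> 'rV[R]_n) : Prop :=
  [/\ (forall (a : R) x y w, br (a *: x + y) w = a *: br x w + br y w),
      (forall x, br x x = 0) &
      (forall x y w, br x (br y w) + br y (br w x) + br w (br x y) = 0)].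

Definition two_step_nilpotent (R : realType) (n : nat)
  (br : 'rV[R]_n -> 'rV[R]_n -> 'rV[R]_n) : Prop :=
  (forall x y w, br (br x y) w = 0) /\ (exists x y, br x y != 0).

Definition basis_mx (R : realType) (n : nat) (b : 'I_n -> 'rV[R]_n) : 'M[R]_n :=
  \matrix_(i < n) b i.

(* b is an onb basis for <.,.>: <b i, b j> = 0 for i <> j and
   <b i, b i> = +1 or -1. (Such a family is automatically a basis.) *)
Definition onb (R : realType) (n : nat) (G : 'M[R]_n)
  (b : 'I_n -> 'rV[R]_n) : Prop :=
  (forall i j, i != j -> bform G (b i) (b j) = 0) /\
  (forall i, bform G (b i) (b i) = 1 \/ bform G (b i) (b i) = -1).

(* The involution iota: iota (b i) = <b i, b i> b i, extended linearly.
   With row vectors, iota v = v *m iota_mx G b. *)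
Definition iota_mx (R : realType) (n : nat) (G : 'M[R]_n)
  (b : 'I_n -> 'rV[R]_n) : 'M[R]_n :=
  invmx (basis_mx b) *m diag_mx (\row_i bform G (b i) (b i)) *m basis_mx b.

From HB Require Import structures.
From mathcomp Require Import all_boot all_order all_algebra.
From mathcomp Require Import reals.
Set Implicit Arguments. Unset Strict Implicit. Unset Printing Implicit Defensive.
Import Order.TTheory GRing.Theory Num.Theory.
Local Open Scope ring_scope.

(* Pick a nonzero x in E and set j(z) := iota o J_(iota z). As the center is
   positive definite, iota fixes it pointwise, so the pH-condition reads
   j(z)^2 = -<z,z> on E. Hence z |-> j(z) x is a linear map from Z to E which
   is injective (j(z) x = 0 gives -<z,z> x = 0) and misses x (j(z) x = x gives
   x = -<z,z> x). So Z + span(x) embeds in E. *)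

Section BilinearForm.
Variables (R : realType) (n : nat) (G : 'M[R]_n).
Implicit Types (a : R) (u v w : 'rV[R]_n).

Lemma bformDl u v w : bform G (u + v) w = bform G u w + bform G v w.
Proof. by rewrite /bform !mulmxDl mxE. Qed.

Lemma bformZl a u w : bform G (a *: u) w = a * bform G u w.
Proof. by rewrite /bform -!scalemxAl mxE. Qed.

Lemma bformDr u v w : bform G w (u + v) = bform G w u + bform G w v.
Proof. by rewrite /bform linearD mulmxDr mxE. Qed.

Lemma bformZr a u w : bform G w (a *: u) = a * bform G w u.
Proof. by rewrite /bform linearZ -scalemxAr mxE. Qed.

Lemma bform0l w : bform G 0 w = 0.
Proof. by rewrite /bform !mul0mx mxE. Qed.

Lemma bform0r w : bform G w 0 = 0.
Proof. by rewrite /bform trmx0 mulmx0 mxE. Qed.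

Lemma bform_tr u v : bform G u v = bform G^T v u.
Proof.
rewrite /bform; transitivity ((u *m G *m v^T)^T 0 0); first by rewrite [RHS]mxE.
by rewrite !trmx_mul trmxK mulmxA.
Qed.

Lemma bform_delta u i : bform G u (delta_mx 0 i) = (u *m G) 0 i.
Proof. by rewrite /bform trmx_delta -colE mxE. Qed.

Lemma bform_eql u v :
  G \in unitmx -> (forall w, bform G u w = bform G v w) -> u = v.
Proof.
move=> unitG uv; rewrite -(mulmxK unitG u) -(mulmxK unitG v); congr (_ *m _).
by apply/rowP => i; rewrite -!bform_delta.
Qed.

End BilinearForm.

Lemma bform_eqr (R : realType) n (G : 'M[R]_n) u v :
  G \in unitmx -> (forall w, bform G w u = bform G w v) -> u = v.
Proof.
rewrite -unitmx_tr => unitGt uv; apply: (bform_eql unitGt) => w.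
by rewrite -!bform_tr.
Qed.

Section OrthonormalBasis.
Variables (R : realType) (n : nat) (G : 'M[R]_n) (b : 'I_n -> 'rV[R]_n).
Hypothesis onb_b : onb G b.

Local Notation B := (basis_mx b).
Local Notation D := (diag_mx (\row_i bform G (b i) (b i))).

Lemma onb_norm_sqr i : bform G (b i) (b i) ^+ 2 = 1.
Proof. by case: (onb_b.2 i) => ->; rewrite ?sqrrN expr1n. Qed.

Lemma onb_neq0 i : b i != 0.
Proof.
apply/eqP => bi0; have /eqP := onb_norm_sqr i.
by rewrite bi0 bform0l expr0n eq_sym oner_eq0.
Qed.

Lemma onb_gram : B *m G *m B^T = D.
Proof.
apply/matrixP => i j.
have -> : (B *m G *m B^T) i j = bform G (b i) (b j).
  rewrite /bform -[b i](rowK b) -[b j](rowK b) !rowE trmx_mul trmx_delta.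
  by rewrite !mulmxA -(mulmxA _ B G) -(mulmxA _ (B *m G)) -rowE -colE !mxE.
rewrite !mxE; case: eqVneq => [->|/onb_b.1 //]; by rewrite mulr1n.
Qed.

Lemma onb_diag_sqr : D *m D = 1%:M.
Proof.
rewrite mulmx_diag; apply/matrixP => i j; rewrite !mxE -expr2 onb_norm_sqr.
by case: eqP.
Qed.

Lemma onb_unitmx : B \in unitmx /\ G \in unitmx.
Proof.
have /mulmx1_unit [unitD _] := onb_diag_sqr.
by move: unitD; rewrite -onb_gram !unitmx_mul => /andP [/andP [-> ->] _].
Qed.

Lemma onb_row_full : row_full B.
Proof. by rewrite row_full_unit onb_unitmx.1. Qed.

Lemma bform_basis_mul i (e : 'rV[R]_n) :
  bform G (b i) (e *m B) = bform G (b i) (b i) * e 0 i.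
Proof.
rewrite [LHS]/bform -[in LHS](rowK b i) rowE trmx_mul !mulmxA.
rewrite -(mulmxA _ B G) -(mulmxA _ (B *m G)) onb_gram -rowE row_diag_mx.
by rewrite -scalemxAl mxE -rowE !mxE.
Qed.

Lemma iota_mx_isometry u v :
  bform G (u *m iota_mx G b) (v *m iota_mx G b) = bform G u v.
Proof.
have [unitB _] := onb_unitmx.
have isoM : iota_mx G b *m G *m (iota_mx G b)^T = G.
  rewrite /iota_mx !trmx_mul tr_diag_mx trmx_inv !mulmxA.
  rewrite -(mulmxA _ B G) -(mulmxA _ (B *m G)) onb_gram -(mulmxA _ D D).
  rewrite onb_diag_sqr mulmx1 -onb_gram !mulmxA mulVmx // mul1mx mulmxK //.
  by rewrite unitmx_tr.
by rewrite /bform trmx_mul mulmxA -(mulmxA u) -(mulmxA u) isoM.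
Qed.

Lemma iota_mx_fixed v :
  (forall i, bform G (b i) (b i) = -1 -> bform G (b i) v = 0) ->
  v *m iota_mx G b = v.
Proof.
have [unitB _] := onb_unitmx.
have [e ->] : exists e, v = e *m B by exists (v *m invmx B); rewrite mulmxKV.
move=> e_perp; suff eD : e *m D = e by rewrite /iota_mx !mulmxA mulmxK // eD.
apply/rowP => i; rewrite mul_mx_diag !mxE.
case: (onb_b.2 i) => di; rewrite di ?mulr1 //.
have /eqP := e_perp i di; rewrite bform_basis_mul di mulN1r oppr_eq0.
by move=> /eqP ->; rewrite mul0r.
Qed.

End OrthonormalBasis.

Section AdjointOfBracket.
Variables (R : realType) (n : nat) (G : 'M[R]_n).
Variables (br J : 'rV[R]_n -> 'rV[R]_n -> 'rV[R]_n).
Hypothesis unitG : G \in unitmx.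
Hypothesis br_linl : forall (a : R) x y w, br (a *: x + y) w = a *: br x w + br y w.
Hypothesis br_alt : forall x, br x x = 0.
Hypothesis J_adj : forall y x w, bform G (J y x) w = bform G y (br x w).

Lemma bracket_addr x w1 w2 : br x (w1 + w2) = br x w1 + br x w2.
Proof. by apply: (bform_eqr unitG) => y; rewrite bformDr -!J_adj bformDr. Qed.

Lemma bracket_central_r x z : (forall w, br z w = 0) -> br x z = 0.
Proof.
move=> zc; have := br_alt (x + z).
by rewrite -{1}[x]scale1r br_linl scale1r !bracket_addr br_alt zc !add0r br_alt addr0.
Qed.

Lemma adjoint_linl a y1 y2 x : J (a *: y1 + y2) x = a *: J y1 x + J y2 x.
Proof.
by apply: (bform_eql unitG) => w; rewrite bformDl bformZl !J_adj bformDl bformZl.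
Qed.

Lemma adjoint_linr y a x1 x2 : J y (a *: x1 + x2) = a *: J y x1 + J y x2.
Proof.
apply: (bform_eql unitG) => w.
by rewrite bformDl bformZl !J_adj br_linl bformDr bformZr.
Qed.

Lemma adjoint_orthogonal_central y x z :
  (forall w, br z w = 0) -> bform G (J y x) z = 0.
Proof. by move=> zc; rewrite J_adj bracket_central_r // bform0r. Qed.

End AdjointOfBracket.

Section CliffordRankBound.
Variables (R : realType) (n : nat) (G Zs Es : 'M[R]_n).
Variable j : 'rV[R]_n -> 'rV[R]_n -> 'rV[R]_n.
Hypothesis Zs_pos : forall z, (z <= Zs)%MS -> z != 0 -> 0 < bform G z z.
Hypothesis j_linl : forall a z1 z2 y, j (a *: z1 + z2) y = a *: j z1 y + j z2 y.
Hypothesis j_linr : forall z a y1 y2, j z (a *: y1 + y2) = a *: j z y1 + j z y2.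
Hypothesis j_Es : forall z y, (z <= Zs)%MS -> (y <= Es)%MS -> (j z y <= Es)%MS.
Hypothesis j_sqr : forall z y, (z <= Zs)%MS -> (y <= Es)%MS ->
  j z (j z y) = - bform G z z *: y.

Lemma bform_Zs_ge0 z : (z <= Zs)%MS -> 0 <= bform G z z.
Proof.
by move=> zZ; case: (eqVneq z 0) => [->|/(Zs_pos zZ)/ltW //]; rewrite bform0l.
Qed.

Variable x : 'rV[R]_n.
Hypotheses (x_Es : (x <= Es)%MS) (x_neq0 : x != 0).

Lemma clifford_action_eq0 z : (z <= Zs)%MS -> j z x = 0 -> z = 0.
Proof.
move=> zZ jzx; apply/eqP/negP => /negP/(Zs_pos zZ); rewrite lt_neqAle eq_sym.
have j0 : j z 0 = 0.
  by have := j_linr z (-1) 0 0; rewrite scaleN1r addNr scaleN1r addNr.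
have /eqP := j_sqr zZ x_Es; rewrite jzx j0 eq_sym scaler_eq0 (negbTE x_neq0).
by rewrite orbF oppr_eq0 => ->.
Qed.

Lemma clifford_action_neq z : (z <= Zs)%MS -> j z x != x.
Proof.
move=> zZ; apply/eqP => jzx; have := j_sqr zZ x_Es; rewrite !jzx.
move=> /eqP; rewrite -subr_eq0 -{1}[x]scale1r -scalerBl opprK scaler_eq0.
by rewrite (negbTE x_neq0) orbF gt_eqF // ltr_wpDr ?bform_Zs_ge0.
Qed.

Theorem clifford_mxrank_lt : (\rank Zs < \rank Es)%N.
Proof.
pose L := lin1_mx (j^~ x).
have mulL u : u *m L = j u x.
  pose jx : {linear 'rV[R]_n -> 'rV[R]_n} := HB.pack (j^~ x)
    (GRing.isLinear.Build _ _ _ _ (j^~ x) (fun a u v => j_linl a u v x)).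
  exact: (mul_rV_lin1 jx).
have rank_img : \rank (Zs *m L) = \rank Zs.
  rewrite -[RHS](mxrank_mul_ker Zs L); suff -> : (Zs :&: kermx L)%MS = 0.
    by rewrite mxrank0 addn0.
  apply/eqP; rewrite -submx0; apply/rV_subP => v vK.
  have vZ := submx_trans vK (capmxSl _ _).
  have /sub_kermxP vL := submx_trans vK (capmxSr _ _).
  by rewrite (clifford_action_eq0 vZ) ?sub0mx // -mulL.
have img_Es : (Zs *m L <= Es)%MS.
  by apply/row_subP => k; rewrite row_mul mulL j_Es ?row_sub.
have x_notin_img : ~~ (x <= Zs *m L)%MS.
  apply/negP => /submxP [w]; rewrite mulmxA mulL => xw.
  by have := clifford_action_neq (submxMl w Zs); rewrite -xw eqxx.
have img_ltx : (Zs *m L < Zs *m L + x)%MS.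
  rewrite ltmxE addsmxSl; apply: contra x_notin_img.
  exact: submx_trans (addsmxSr _ _).
rewrite -rank_img; apply: leq_trans (rank_ltmx img_ltx) (mxrankS _).
by rewrite addsmx_sub img_Es x_Es.
Qed.

End CliffordRankBound.

Theorem mainTheorem2 (R : realType) (n : nat)
  (G : 'M[R]_n) (br : 'rV[R]_n -> 'rV[R]_n -> 'rV[R]_n)
  (Zs Es : 'M[R]_n) (b : 'I_n -> 'rV[R]_n)
  (J : 'rV[R]_n -> 'rV[R]_n -> 'rV[R]_n) :
  (* metric: symmetric, with an onb basis b having exactly one timelike vector *)
  G^T = G ->
  onb G b ->
  (exists t : 'I_n, forall i, (bform G (b i) (b i) == -1) = (i == t)) ->
  (* 2-step nilpotent Lie algebra *)
  lie_bracket br -> two_step_nilpotent br ->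
  (* Zs spans the center, Es spans its orthogonal complement E = Z^perp *)
  (forall v, (v <= Zs)%MS <-> (forall w, br v w = 0)) ->
  (forall v, (v <= Es)%MS <-> (forall z, (z <= Zs)%MS -> bform G v z = 0)) ->
  (* the center is positive definite *)
  (forall z, (z <= Zs)%MS -> z != 0 -> 0 < bform G z z) ->
  (* the onb basis is adapted to n = Z (+) E *)
  (forall i, (b i <= Zs)%MS \/ (b i <= Es)%MS) ->
  (* J_y defined by <J_y x, w> = <y, [x, w]> *)
  (forall y x w, bform G (J y x) w = bform G y (br x w)) ->
  (* pH-type: j(z)^2 = - <z, iota z> I on E, where j(y) = iota o J_(iota y) *)
  (let iota v := v *m iota_mx G b in
   forall z, (z <= Zs)%MS -> forall x, (x <= Es)%MS ->
     iota (J (iota z) (iota (J (iota z) x))) = - bform G z (iota z) *: x) ->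
  (\rank Zs + 1 <= \rank Es)%N.
Proof.
move=> _ onb_b _ [br_linl br_alt _] [_ [x0 [y0 bxy0]]] hZ hE Zs_pos adapted.
move=> hJ /= pH; have [_ unitG] := onb_unitmx onb_b.
have iotaZ (z : 'rV[R]_n) : (z <= Zs)%MS -> z *m iota_mx G b = z.
  move=> zZ; apply: (iota_mx_fixed onb_b) => i bi_neg.
  case: (adapted i) => [biZ|/hE/(_ z zZ) //].
  by have := Zs_pos _ biZ (onb_neq0 onb_b i); rewrite bi_neg ltr0N1.
have iotaE (v : 'rV[R]_n) : (v <= Es)%MS -> (v *m iota_mx G b <= Es)%MS.
  by move=> /hE vE; apply/hE => z zZ; rewrite -(iotaZ z zZ) iota_mx_isometry ?vE.
have /existsP [i biZ] : [exists i, ~~ (b i <= Zs)%MS].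
  rewrite -negb_forall; apply: contra bxy0 => /forallP allZ.
  have BZ : (basis_mx b <= Zs)%MS by apply/row_subP => i; rewrite rowK allZ.
  apply/eqP/(proj1 (hZ x0)); apply: submx_trans BZ.
  exact/submx_full/(onb_row_full onb_b).
have biE : (b i <= Es)%MS by case: (adapted i) => // biZ'; rewrite biZ' in biZ.
pose j z y := J (z *m iota_mx G b) y *m iota_mx G b.
rewrite addn1; apply: (@clifford_mxrank_lt _ _ G Zs Es j) biE (onb_neq0 onb_b i).
- exact: Zs_pos.
- move=> a z1 z2 y; rewrite /j mulmxDl -scalemxAl (adjoint_linl unitG hJ).
  by rewrite mulmxDl -scalemxAl.
- by move=> z a y1 y2; rewrite /j (adjoint_linr unitG br_linl hJ) mulmxDl -scalemxAl.
- move=> z y _ _; apply/iotaE/hE => w /hZ.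
  exact: (adjoint_orthogonal_central unitG br_linl br_alt hJ).
- by move=> z y zZ yE; rewrite /j pH // iotaZ.
Qed.
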